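(* Let $R\in\mathcal C_{K_0}$ and write $R=X^\dagger QX$ with $Q,X\in\mathcal A'_G$, $Q\ge0$, $\operatorname{Rng}(X)=\operatorname{Supp}(Q)$. Then an operator $T$ on $\mathcal K\otimes\mathcal H$ is a perturbation of $R$ in $\mathcal C_{K_0}$ if and only if $T$ is a Hermitian element of $\mathcal A'_G$ with $\operatorname{Tr}_{\mathcal K}[T]=0$ and $T=X^\dagger OX$ for some nonzero Hermitian $O\in\mathcal A'_G$ with $\operatorname{Supp}(O)\subseteq\operatorname{Rng}(X)$. Writing $Q=\bigoplus_k(I_{\mathcal H_k}\otimes Q_k)$ and $X=\bigoplus_k(I_{\mathcal H_k}\otimes X_k)$, such $O$ has the form $O=\bigoplus_k(I_{\mathcal H_k}\otimes O_k)$ with $\operatorname{Supp}(O_k)\subseteq\operatorname{Rng}(X_k)$ for all $k$.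
   Context: Let $\mathcal H,\mathcal K$ be finite-dimensional Hilbert spaces and $g\mapsto U_g$, $g\mapsto V_g$ unitary representations of a group $G$ on $\mathcal H$ and $\mathcal K$. $U_g^*$ is the complex conjugate in a fixed orthonormal basis. Decompose $\mathcal K\otimes\mathcal H=\bigoplus_k(\mathcal H_k\otimes\mathbb C^{m_k})$ according to the equivalence classes $k$ of irreducible components of $V_g\otimes U_g^*$ (irreducible space $\mathcal H_k$, multiplicity $m_k$). The commutant $\mathcal A'_G$ of $\{V_g\otimes U_g^*\}$ consists of the operators $\bigoplus_k(I_{\mathcal H_k}\otimes M_k)$, $M_k\in\mathcal B(\mathbb C^{m_k})$. CP maps (quantum operations) $\mathcal M$ covariant in the sense $\mathcal M^*(U_g\rho U_g^\dagger)=V_g\mathcal M^*(\rho)V_g^\dagger$ correspond bijectively to operators $R\ge0$ in $\mathcal A'_G$ via $R=(\mathcal M^*\otimes\mathcal I)(|I\rangle\langle I|)$, $|I\rangle=\sum_n|n\rangle\otimes|n\rangle$. Fix an operator $K_0$ on $\mathcal H$ with $0\le K_0\le I_{\mathcal H}$ and let $\mathcal C_{K_0}=\{R\in\mathcal A'_G: R\ge0,\ \operatorname{Tr}_{\mathcal K}[R]=K_0\}$, a convex set. A nonzero $T$ is a perturbation of $R\in\mathcal C_{K_0}$ if $R\pm tT\in\mathcal C_{K_0}$ for some $t>0$; $R$ is extremal iff it has no perturbation. $\operatorname{Supp}(O)=\operatorname{Ker}(O)^\perp$, $\operatorname{Rng}$ denotes range. *)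

From HB Require Import structures.
From mathcomp Require Import all_boot all_order all_algebra.
From mathcomp Require mxtens.
Set Implicit Arguments. Unset Strict Implicit. Unset Printing Implicit Defensive.
Import Order.TTheory GRing.Theory Num.Theory.
Local Open Scope ring_scope.

(* Finite-dimensional Hilbert spaces C^n over a numeric algebraically closed
   field C (e.g. the complex numbers); operators are square matrices acting on
   column vectors 'cV_n.  Tensor product K (x) H is C^(M*N) with the Kronecker
   product mxtens.tensmx (first factor = K). *)

Section Defs.
Variable C : numClosedFieldType.

Definition adjmx m n (A : 'M[C]_(m, n)) : 'M[C]_(n, m) := (map_mx Num.conj A)^T.

Definition is_herm n (A : 'M[C]_n) : Prop := adjmx A = A.

Definition psd n (A : 'M[C]_n) : Prop :=
  forall v : 'cV[C]_n, 0 <= (adjmx v *m A *m v) 0 0.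

(* Rng(X) and Supp(O) = Ker(O)^perp, as predicates on vectors *)
Definition in_rng n (X : 'M[C]_n) (v : 'cV[C]_n) : Prop := exists u, v = X *m u.
Definition in_supp n (O : 'M[C]_n) (v : 'cV[C]_n) : Prop :=
  forall w : 'cV[C]_n, O *m w = 0 -> adjmx w *m v = 0.

Definition supp_sub_rng n (O X : 'M[C]_n) : Prop :=
  forall v, in_supp O v -> in_rng X v.

Definition is_group (G : Type) (gmul : G -> G -> G) (gone : G) (ginv : G -> G) :=
  [/\ forall a b c, gmul a (gmul b c) = gmul (gmul a b) c,
      forall a, gmul gone a = a &
      forall a, gmul (ginv a) a = gone].

Definition unitary_rep (G : Type) (gmul : G -> G -> G) (gone : G) n
  (U : G -> 'M[C]_n) : Prop :=
  [/\ forall g h, U (gmul g h) = U g *m U h,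
      U gone = 1%:M &
      forall g, U g *m adjmx (U g) = 1%:M /\ adjmx (U g) *m U g = 1%:M].

(* irreducibility: no nontrivial invariant subspace (column space of S) *)
Definition irreducible_rep (G : Type) n (P : G -> 'M[C]_n) : Prop :=
  (0 < n)%N /\
  forall S : 'M[C]_n, (forall g, exists A : 'M[C]_n, P g *m S = S *m A) ->
    S = 0 \/ \rank S = n.

Definition equiv_rep (G : Type) n1 n2 (P1 : G -> 'M[C]_n1) (P2 : G -> 'M[C]_n2) : Prop :=
  exists T : 'M[C]_(n1, n2), [/\ n1 = n2, \rank T = n1 &
     forall g, P1 g *m T = T *m P2 g].

Definition VUc (G : Type) M N (U : G -> 'M[C]_N) (V : G -> 'M[C]_M) (g : G)
  : 'M[C]_(M * N) := mxtens.tensmx (V g) (map_mx Num.conj (U g)).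

Definition in_commutant (G : Type) M N (U : G -> 'M[C]_N) (V : G -> 'M[C]_M)
  (T : 'M[C]_(M * N)) : Prop :=
  forall g, T *m VUc U V g = VUc U V g *m T.

Definition ptraceK M N (T : 'M[C]_(M * N)) : 'M[C]_N :=
  \matrix_(i, j) \sum_(a < M) T (mxtens.mxtens_index (a, i)) (mxtens.mxtens_index (a, j)).

Definition in_CK0 (G : Type) M N (U : G -> 'M[C]_N) (V : G -> 'M[C]_M)
  (K0 : 'M[C]_N) (R : 'M[C]_(M * N)) : Prop :=
  [/\ in_commutant U V R, psd R & ptraceK R = K0].

Definition perturbation (G : Type) M N (U : G -> 'M[C]_N) (V : G -> 'M[C]_M)
  (K0 : 'M[C]_N) (R T : 'M[C]_(M * N)) : Prop :=
  T <> 0 /\ exists t : C, [/\ 0 < t, in_CK0 U V K0 (R + t *: T)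
                                   & in_CK0 U V K0 (R - t *: T)].

(* block-diagonal operator  W^dagger (oplus_k I_{H_k} (x) M_k) W, where the
   unitary W : K(x)H -> oplus_k H_k (x) C^{m_k} implements the isotypic
   decomposition; d k = dim H_k, mm k = m_k *)
Definition blockop M N p (d mm : 'I_p -> nat)
  (W : 'M[C]_(\sum_(k < p) (d k * mm k), M * N))
  (Ms : forall k : 'I_p, 'M[C]_(mm k)) : 'M[C]_(M * N) :=
  adjmx W *m \mxdiag_(k < p) (mxtens.tensmx (1%:M : 'M[C]_(d k)) (Ms k)) *m W.

End Defs.

From HB Require Import structures.
From mathcomp Require Import all_boot all_order all_algebra.
From mathcomp Require mxtens.
From mathcomp Require Import spectral.
Import Order.TTheory GRing.Theory Num.Theory.
Local Open Scope ring_scope.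

Set Implicit Arguments. Unset Strict Implicit. Unset Printing Implicit Defensive.

(* If R +- tT both lie in C_K0, then T is Hermitian, lies in the commutant,
   has zero partial trace, and vanishes on Ker R, which contains Ker X.  A
   pseudo-inverse H of X^dagger X is a polynomial in it, hence stays in the
   commutant, and with Y = H X^dagger one gets T = X^dagger O X for
   O = Y^dagger T Y.  Conversely, Supp O <= Rng X = Supp Q gives
   Ker Q <= Ker O; in an eigenbasis of Q, O then lives on the block where Q is
   positive definite, so Q +- tO >= 0 for small t > 0, and conjugating by X
   puts R +- tT in C_K0.  The block form of O is obtained by compressing with
   the isometric embedding of C^(m_k) into the k-th isotypic summand. *)

Section Adjoint.
Variable C : numClosedFieldType.

Lemma adjmxE m n (A : 'M[C]_(m, n)) i j : adjmx A i j = (A j i)^*.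
Proof. by rewrite !mxE. Qed.

Lemma adjmxM m n q (A : 'M[C]_(m, n)) (B : 'M[C]_(n, q)) :
  adjmx (A *m B) = adjmx B *m adjmx A.
Proof. by rewrite /adjmx map_mxM trmx_mul. Qed.

Lemma adjmxK m n (A : 'M[C]_(m, n)) : adjmx (adjmx A) = A.
Proof. by apply/matrixP => i j; rewrite !mxE conjCK. Qed.

Lemma adjmxD m n (A B : 'M[C]_(m, n)) : adjmx (A + B) = adjmx A + adjmx B.
Proof. by apply/matrixP => i j; rewrite !mxE rmorphD. Qed.

Lemma adjmxZ m n a (A : 'M[C]_(m, n)) : adjmx (a *: A) = a^* *: adjmx A.
Proof. by apply/matrixP => i j; rewrite !mxE rmorphM. Qed.

Lemma adjmx0 m n : adjmx (0 : 'M[C]_(m, n)) = 0.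
Proof. by apply/matrixP => i j; rewrite !mxE rmorph0. Qed.

Lemma adjmx1 n : adjmx (1%:M : 'M[C]_n) = 1%:M.
Proof. by rewrite /adjmx map_mx1 trmx1. Qed.

Lemma trmxC_adjmx m n (A : 'M[C]_(m, n)) : map_mx Num.conj A^T = adjmx A.
Proof. by rewrite /adjmx map_trmx. Qed.

Lemma adjmx_conj m n (A : 'M[C]_(m, n)) :
  adjmx (map_mx Num.conj A) = map_mx Num.conj (adjmx A).
Proof. by apply/matrixP => i j; rewrite !mxE. Qed.

Lemma adjmx_tensmx m n p q (A : 'M[C]_(m, n)) (B : 'M[C]_(p, q)) :
  adjmx (mxtens.tensmx A B) = mxtens.tensmx (adjmx A) (adjmx B).
Proof. by apply/matrixP => i j; rewrite !mxE rmorphM. Qed.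

Lemma tensmx11 m n : mxtens.tensmx (1%:M : 'M[C]_m) (1%:M : 'M[C]_n) = 1%:M.
Proof.
apply/matrixP => i j.
case: (mxtens.mxtens_indexP i) => i0 i1; case: (mxtens.mxtens_indexP j) => j0 j1.
rewrite mxtens.tensmxE !mxE -natrM mulnb; congr (_ %:R).
by rewrite (inj_eq (can_inj (@mxtens.mxtens_indexK _ _))) xpair_eqE.
Qed.

Lemma adjmx_mxcol p (d : 'I_p -> nat) n (B : forall l : 'I_p, 'M[C]_(d l, n)) :
  adjmx (\mxcol_l B l) = \mxrow_l adjmx (B l).
Proof. by apply/matrixP => i j; rewrite !mxE. Qed.

Lemma gram_eq0 m n (A : 'M[C]_(m, n)) : adjmx A *m A = 0 -> A = 0.
Proof.
move=> h; apply/matrixP => i j.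
have := congr1 (fun B : 'M[C]_n => B j j) h; rewrite !mxE => /eqP.
rewrite psumr_eq0; last by move=> k _; rewrite !mxE mulrC mul_conjC_ge0.
move=> /allP /(_ i); rewrite mem_index_enum => /(_ isT) /implyP /(_ isT).
by rewrite !mxE mulrC mul_conjC_eq0 => /eqP ->.
Qed.

Lemma herm_ker_sqr n m (A : 'M[C]_n) (B : 'M[C]_(n, m)) :
  is_herm A -> A *m (A *m B) = 0 -> A *m B = 0.
Proof. by move=> hA h; apply: gram_eq0; rewrite adjmxM hA -mulmxA h mulmx0. Qed.

Lemma mx_eq0_col n m (A : 'M[C]_(n, m)) : (forall z : 'cV[C]_m, A *m z = 0) -> A = 0.
Proof.
move=> h; apply/matrixP => i j.
by have := congr1 (fun Z : 'cV[C]_n => Z i 0) (h (delta_mx j 0)); rewrite -colE !mxE.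
Qed.

Lemma ker_sub_mulmx n m (X T : 'M[C]_n) :
  (forall w : 'cV[C]_n, X *m w = 0 -> T *m w = 0) ->
  forall B : 'M[C]_(n, m), X *m B = 0 -> T *m B = 0.
Proof.
move=> h B hB; apply/matrixP => i j.
have hc : X *m col j B = 0 by rewrite colE mulmxA hB mul0mx.
have := congr1 (fun Z : 'cV[C]_n => Z i 0) (h _ hc).
by rewrite colE mulmxA -colE !mxE.
Qed.

End Adjoint.

Section Form.
Variable C : numClosedFieldType.

Definition mxform n (u : 'cV[C]_n) (A : 'M[C]_n) (w : 'cV[C]_n) : C :=
  (adjmx u *m A *m w) 0 0.

Lemma mxformDl n (u u' w : 'cV[C]_n) A :
  mxform (u + u') A w = mxform u A w + mxform u' A w.
Proof. by rewrite /mxform adjmxD !mulmxDl mxE. Qed.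

Lemma mxformDr n (u w w' : 'cV[C]_n) A :
  mxform u A (w + w') = mxform u A w + mxform u A w'.
Proof. by rewrite /mxform mulmxDr mxE. Qed.

Lemma mxformZl n a (u w : 'cV[C]_n) A : mxform (a *: u) A w = a^* * mxform u A w.
Proof. by rewrite /mxform adjmxZ -!scalemxAl mxE. Qed.

Lemma mxformZr n a (u w : 'cV[C]_n) A : mxform u A (a *: w) = a * mxform u A w.
Proof. by rewrite /mxform -scalemxAr mxE. Qed.

Lemma mxformDm n (u w : 'cV[C]_n) A B :
  mxform u (A + B) w = mxform u A w + mxform u B w.
Proof. by rewrite /mxform mulmxDr mulmxDl !mxE. Qed.

Lemma mxformBm n (u w : 'cV[C]_n) A B :
  mxform u (A - B) w = mxform u A w - mxform u B w.
Proof. by rewrite /mxform mulmxBr mulmxBl !mxE. Qed.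

Lemma mxformZm n a (u w : 'cV[C]_n) A : mxform u (a *: A) w = a * mxform u A w.
Proof. by rewrite /mxform -scalemxAr -scalemxAl mxE. Qed.

Lemma mxform_adjmx n (u w : 'cV[C]_n) A : mxform u (adjmx A) w = (mxform w A u)^*.
Proof. by rewrite /mxform -adjmxE !adjmxM adjmxK mulmxA. Qed.

Lemma mxform_mulmx n (u w : 'cV[C]_n) (X B : 'M[C]_n) :
  mxform u (adjmx X *m B *m X) w = mxform (X *m u) B (X *m w).
Proof. by rewrite /mxform adjmxM !mulmxA. Qed.

Lemma mxform_delta n (B : 'M[C]_n) i j :
  mxform (delta_mx i 0) B (delta_mx j 0) = B i j.
Proof.
rewrite /mxform; have -> : adjmx (delta_mx i 0 : 'cV[C]_n) = delta_mx 0 i.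
  by apply/matrixP => a b; rewrite !mxE; case: (b == i); case: (a == 0); rewrite /= ?rmorph1 ?rmorph0.
by rewrite -rowE -colE !mxE.
Qed.

Lemma mxform_eq0 n (B : 'M[C]_n) : (forall u w, mxform u B w = 0) -> B = 0.
Proof. by move=> h; apply/matrixP => i j; rewrite -mxform_delta h mxE. Qed.

Lemma mxform_sum n (z : 'cV[C]_n) (A : 'M[C]_n) :
  mxform z A z = \sum_j \sum_i ((z i 0)^* * A i j * z j 0).
Proof.
rewrite /mxform mxE; apply: eq_bigr => j _; rewrite mxE mulr_suml.
by apply: eq_bigr => i _; rewrite !mxE.
Qed.

Lemma mxform_diag n (z : 'cV[C]_n) (d : 'rV[C]_n) :
  mxform z (diag_mx d) z = \sum_i d 0 i * ((z i 0)^* * z i 0).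
Proof.
rewrite mxform_sum; apply: eq_bigr => j _.
rewrite (bigD1 j) //= big1 ?addr0; first by rewrite !mxE eqxx mulr1n mulrAC mulrC.
by move=> i /negbTE nij; rewrite !mxE nij mulr0n mulr0 mul0r.
Qed.

Lemma psd_conjmx n (B X : 'M[C]_n) : psd B -> psd (adjmx X *m B *m X).
Proof. by move=> hB v; rewrite -/(mxform _ _ _) mxform_mulmx; apply: hB. Qed.

(* Polarization, using [u + w] and [u + 'i w]. *)
Lemma psd_herm n (A : 'M[C]_n) : psd A -> is_herm A.
Proof.
move=> hA; apply/eqP; rewrite eq_sym -subr_eq0; apply/eqP.
set B := A - adjmx A.
have B0 v : mxform v B v = 0.
  rewrite /B mxformBm mxform_adjmx.
  have /ger0_real/conj_Creal -> : 0 <= mxform v A v by exact: hA.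
  by rewrite subrr.
apply: mxform_eq0 => u w.
have e1 := B0 (u + w); rewrite mxformDl !mxformDr !B0 add0r addr0 in e1.
have e2 := B0 (u + 'i *: w).
rewrite mxformDl !mxformDr !mxformZl !mxformZr !B0 !mulr0 add0r addr0 conjCi in e2.
have e3 : mxform w B u = - mxform u B w by apply/eqP; rewrite -addr_eq0 addrC e1.
rewrite e3 mulrNN -mulr2n -mulrnAr in e2.
move/eqP: e2; rewrite mulf_eq0 (negbTE (neq0Ci C)) /= mulrn_eq0 /=.
by move/eqP.
Qed.

Lemma psd_diag n (Q : 'M[C]_n) : psd Q -> exists (P : 'M[C]_n) (d : 'rV[C]_n),
  [/\ P *m adjmx P = 1%:M, adjmx P *m P = 1%:M, forall i, 0 <= d 0 i
    & Q = adjmx P *m diag_mx d *m P].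
Proof.
move=> hQ; have hQh := psd_herm hQ.
have nQ : Q \is normalmx by apply/normalmxP; rewrite trmxC_adjmx hQh.
have QE := orthomx_spectralP nQ.
set P := spectralmx Q in QE; set d := spectral_diag Q in QE.
have PP' : P *m adjmx P = 1%:M by rewrite -trmxC_adjmx; apply/unitarymxP/spectral_unitarymx.
have iP : invmx P = adjmx P by rewrite invmx_unitary ?trmxC_adjmx ?spectral_unitarymx.
have P'P : adjmx P *m P = 1%:M by rewrite -iP mulVmx // spectral_unit.
rewrite iP in QE; exists P, d; split => // i.
have := hQ (adjmx P *m (delta_mx i 0 : 'cV[C]_n)).
rewrite -/(mxform _ _ _) -mxform_mulmx adjmxK QE !mulmxA PP' mul1mx.
by rewrite -mulmxA PP' mulmx1 mxform_delta mxE eqxx mulr1n.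
Qed.

Lemma psd_ker n (Q : 'M[C]_n) (w : 'cV[C]_n) :
  psd Q -> mxform w Q w = 0 -> Q *m w = 0.
Proof.
move=> /psd_diag [P [d [_ _ hd QE]]] hw.
set z := P *m w.
have term0 i : d 0 i * ((z i 0)^* * z i 0) = 0.
  have : \sum_i d 0 i * ((z i 0)^* * z i 0) = 0.
    by rewrite -mxform_diag -mxform_mulmx -QE.
  move/eqP; rewrite psumr_eq0 => [/allP/(_ i)|j _].
    by rewrite mem_index_enum => /(_ isT) /eqP.
  by rewrite mulr_ge0 // mulrC mul_conjC_ge0.
have Dz : diag_mx d *m z = 0.
  apply/matrixP => i j; rewrite [j]ord1 mul_diag_mx [LHS]mxE [RHS]mxE.
  move/eqP: (term0 i); rewrite mulf_eq0 => /orP[/eqP ->|]; first by rewrite mul0r.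
  by rewrite mulrC mul_conjC_eq0 => /eqP ->; rewrite mulr0.
by rewrite QE -!mulmxA Dz mulmx0.
Qed.

End Form.

Section PseudoInverse.
Variable C : numClosedFieldType.

(* Cayley-Hamilton: if chi_A = X^e r with r(0) != 0, then A r(A) = 0 (the
   kernels of the powers of a Hermitian A agree), and writing r = r(0) + s X
   gives A = A (-s(A)/r(0)) A. *)
Lemma herm_pinv_poly n (A : 'M[C]_n.+1) : is_herm A ->
  exists p : {poly C}, A *m horner_mx A p *m A = A.
Proof.
move=> hA; have CH := Cayley_Hamilton A.
have chi0 : char_poly A != 0 by apply/monic_neq0/char_poly_monic.
have [e [r]] := multiplicity_XsubC (char_poly A) 0.
rewrite chi0 /= => nr0 hchi.
rewrite hchi polyC0 subr0 rmorphM rmorphXn /= horner_mx_X in CH.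
set Br := horner_mx A r in CH.
have cAB : GRing.comm A Br by rewrite /GRing.comm -!mulmxE; exact: comm_mx_horner.
have hAB : A ^+ e * Br = 0 by rewrite -(commrX e (commr_sym cAB)); exact: CH.
have hA1 : A * Br = 0.
  case: e hAB {CH hchi} => [|e]; first by rewrite expr0 mul1r => ->; rewrite mulr0.
  elim: e => [|e IH]; first by rewrite expr1.
  move=> h; apply: IH; rewrite exprS -mulrA -!mulmxE.
  apply: herm_ker_sqr => //; rewrite !mulmxE.
  by rewrite mulrA -expr2 mulrA -exprD add2n.
have : root (r - (r.[0])%:P) 0 by rewrite /root !hornerE subrr.
case/factor_theorem => s; rewrite polyC0 subr0 => hs.
have rE : r = r.[0]%:P + s * 'X by rewrite -hs addrC subrK.
exists ((- (r.[0])^-1) *: s).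
have : A * (r.[0]%:M + horner_mx A s * A) = 0.
  by rewrite -hA1 /Br {2}rE rmorphD rmorphM /= horner_mx_C horner_mx_X.
rewrite mulrDr => h.
have /eqP : r.[0] *: A + A *m horner_mx A s *m A = 0.
  by rewrite -mul_mx_scalar -mulmxA !mulmxE.
rewrite addrC addr_eq0 => /eqP h2.
rewrite linearZ /= -scalemxAr -scalemxAl h2 scalerN scalerA mulNr mulVf //.
by rewrite scaleN1r opprK.
Qed.

Lemma herm_pinv n (A : 'M[C]_n) : is_herm A -> exists H : 'M[C]_n,
  [/\ A *m H *m A = A, A *m H = H *m A &
      forall Z, A *m Z = Z *m A -> H *m Z = Z *m H].
Proof.
case: n A => [|n] A hA.
  by exists 0; split => [|//|Z _]; apply/matrixP => -[].
have [p hp] := herm_pinv_poly hA.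
exists (horner_mx A p); split => [//||Z hZ]; last exact: comm_horner_mx.
by symmetry; apply: comm_horner_mx.
Qed.

Lemma herm_supp_rng n (O : 'M[C]_n) (v : 'cV[C]_n) :
  is_herm O -> in_supp O v -> exists u, v = O *m u.
Proof.
move=> hO hv; have [H [OHO cOH _]] := herm_pinv hO.
set w := v - O *m H *m v.
have Ow : O *m w = 0.
  by rewrite /w mulmxBr !mulmxA -[O *m O *m H]mulmxA cOH mulmxA OHO subrr.
have e1 : adjmx w *m (O *m H *m v) = 0.
  by rewrite !mulmxA -{1}hO -adjmxM Ow adjmx0 !mul0mx.
have : adjmx w *m w = 0 by rewrite {2}/w mulmxBr (hv w Ow) e1 subrr.
move/gram_eq0/eqP; rewrite /w subr_eq0 => /eqP ->.
by exists (H *m v); rewrite mulmxA.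
Qed.

Lemma herm_rng_supp n (O : 'M[C]_n) (z : 'cV[C]_n) :
  is_herm O -> in_supp O (O *m z).
Proof. by move=> hO w hw; rewrite mulmxA -{1}hO -adjmxM hw adjmx0 mul0mx. Qed.

Lemma herm_ker_sub n (Q O : 'M[C]_n) :
  is_herm O -> (forall z : 'cV[C]_n, in_supp Q (O *m z)) ->
  forall w : 'cV[C]_n, Q *m w = 0 -> O *m w = 0.
Proof.
move=> hO hOQ w hw; apply: gram_eq0.
by rewrite adjmxM hO -mulmxA; apply: hOQ.
Qed.

Lemma pinv_left_ker n (X : 'M[C]_n) : exists H : 'M[C]_n,
  [/\ forall T : 'M[C]_n, (forall w : 'cV[C]_n, X *m w = 0 -> T *m w = 0) ->
        T *m (H *m adjmx X *m X) = T
    & forall S, X *m S = S *m X -> adjmx X *m S = S *m adjmx X ->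
        H *m S = S *m H].
Proof.
set A := adjmx X *m X.
have hA : is_herm A by rewrite /is_herm /A adjmxM adjmxK.
have [H [AHA _ cH]] := herm_pinv hA.
exists H; split => [T kerT | S cXS cXS']; last first.
  by apply: cH; rewrite /A -mulmxA cXS !mulmxA cXS'.
have XHA : X *m (H *m A) = X.
  apply/eqP; rewrite -subr_eq0; apply/eqP; apply: gram_eq0.
  have -> : X *m (H *m A) - X = X *m (H *m A - 1%:M) by rewrite mulmxBr mulmx1.
  rewrite adjmxM -mulmxA [adjmx X *m _]mulmxA -/A mulmxBr mulmx1.
  by rewrite [A *m (H *m A)]mulmxA AHA subrr mulmx0.
have : X *m (1%:M - H *m A) = 0 by rewrite mulmxBr mulmx1 XHA subrr.
move/(ker_sub_mulmx kerT); rewrite mulmxBr mulmx1 => /eqP; rewrite subr_eq0.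
by rewrite -mulmxA => /eqP <-.
Qed.

End PseudoInverse.

Section SumBounds.
Variable K : numFieldType.

Lemma ler_sum_term (I : finType) (F : I -> K) i :
  (forall j, 0 <= F j) -> F i <= \sum_j F j.
Proof. by move=> F0; rewrite (bigD1 i) //= lerDl sumr_ge0. Qed.

Lemma support_mass_le n (d a : 'I_n -> K) :
  (forall i, 0 <= d i) -> (forall i, 0 <= a i) ->
  \sum_i (d i != 0)%:R * a i <= (\sum_i (d i)^-1) * \sum_i d i * a i.
Proof.
move=> d0 a0; rewrite mulr_sumr; apply: ler_sum => i _.
have [->|di0] := eqVneq (d i) 0; first by rewrite !mul0r mulr0.
rewrite mul1r mulrA -{1}(mul1r (a i)); apply: ler_wpM2r => //.
have dpos : 0 < d i by rewrite lt0r di0 d0.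
rewrite -(mulVf di0) ler_pM2r //.
by apply: (ler_sum_term (F := fun i => (d i)^-1)) => j; rewrite invr_ge0.
Qed.

End SumBounds.

Section DiagonalPerturbation.
Variable C : numClosedFieldType.

Lemma mxform_le_support n (O : 'M[C]_n) (d : 'rV[C]_n) (z : 'cV[C]_n) :
  (forall i j, O i j != 0 -> d 0 i != 0 /\ d 0 j != 0) ->
  `|mxform z O z| <= (\sum_j \sum_i `|O i j|) *
                      \sum_i (d 0 i != 0)%:R * ((z i 0)^* * z i 0).
Proof.
move=> Osupp; set NN := \sum_i (d 0 i != 0)%:R * _.
have NN_ge k : d 0 k != 0 -> `|z k 0| * `|z k 0| <= NN.
  move=> dk; rewrite -expr2 normCKC.
  have F0 j : 0 <= (d 0 j != 0)%:R * ((z j 0)^* * z j 0).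
    by rewrite mulr_ge0 ?ler0n // mulrC mul_conjC_ge0.
  by move: (ler_sum_term k F0); rewrite dk mul1r.
rewrite mxform_sum; apply: le_trans (ler_norm_sum _ _ _) _.
rewrite mulr_suml; apply: ler_sum => j _.
apply: le_trans (ler_norm_sum _ _ _) _.
rewrite mulr_suml; apply: ler_sum => i _.
rewrite !normrM norm_conjC.
have [->|Oij] := eqVneq (O i j) 0; first by rewrite normr0 mulr0 !mul0r.
have [di dj] := Osupp i j Oij.
rewrite mulrAC mulrC; apply: ler_wpM2l => //.
case/orP: (real_leVge (normr_real (z i 0)) (normr_real (z j 0))) => hle.
  by apply: le_trans (NN_ge j dj); apply: ler_wpM2r.
by apply: le_trans (NN_ge i di); apply: ler_wpM2l.
Qed.

Lemma diag_perturb_psd n (d : 'rV[C]_n) (O : 'M[C]_n) :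
  (forall i, 0 <= d 0 i) -> is_herm O ->
  (forall i j, O i j != 0 -> d 0 i != 0 /\ d 0 j != 0) ->
  exists t, 0 < t /\ psd (diag_mx d + t *: O) /\ psd (diag_mx d - t *: O).
Proof.
move=> d0 hO Osupp.
set h := \sum_i (d 0 i)^-1; set s := \sum_j \sum_i `|O i j|.
have h0 : 0 <= h by apply: sumr_ge0 => i _; rewrite invr_ge0.
have s0 : 0 <= s by do 2! apply: sumr_ge0 => ? _.
have pos : 0 < s * h + 1 by rewrite ltr_wpDl ?mulr_ge0.
set t := (s * h + 1)^-1; have t0 : 0 < t by rewrite invr_gt0.
have creal z : mxform z O z \is Num.real by rewrite CrealE -mxform_adjmx hO.
suff tc z : t * `|mxform z O z| <= mxform z (diag_mx d) z.
  exists t; split; [done | split => z; rewrite -/(mxform _ _ _)].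
    rewrite mxformDm mxformZm -[t * _]opprK subr_ge0 -mulrN.
    apply: le_trans (tc z); apply: ler_wpM2l; first exact: ltW.
    by rewrite -normrN real_ler_norm ?rpredN.
  rewrite mxformBm mxformZm subr_ge0; apply: le_trans (tc z).
  by apply: ler_wpM2l; [exact: ltW | exact: real_ler_norm].
set a := fun i => (z i 0)^* * z i 0.
have a0 i : 0 <= a i by rewrite /a mulrC mul_conjC_ge0.
have hN := support_mass_le (d := fun i => d 0 i) d0 a0.
have S0 : 0 <= \sum_i d 0 i * a i by apply: sumr_ge0 => i _; rewrite mulr_ge0.
rewrite mxform_diag -/a -[X in _ <= X](mulKf (lt0r_neq0 pos)) -/t.
apply: ler_wpM2l; first exact: ltW.
apply: le_trans (mxform_le_support z Osupp) _.
apply: le_trans (ler_wpM2l s0 hN) _.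
by rewrite -/h mulrA mulrDl mul1r lerDl.
Qed.

End DiagonalPerturbation.

Section PsdPerturbation.
Variable C : numClosedFieldType.

(* In an eigenbasis of [Q] the kernel condition confines [O] to the block
   where [Q] is positive definite. *)
Lemma psd_perturb n (Q O : 'M[C]_n) : psd Q -> is_herm O ->
  (forall w : 'cV[C]_n, Q *m w = 0 -> O *m w = 0) ->
  exists t, 0 < t /\ psd (Q + t *: O) /\ psd (Q - t *: O).
Proof.
move=> hQ hO kerO; have [P [d [PP' P'P d0 QE]]] := psd_diag hQ.
set O' := P *m O *m adjmx P.
have hO' : is_herm O' by rewrite /is_herm /O' !adjmxM adjmxK hO mulmxA.
have O'0 i j : d 0 j = 0 -> O' i j = 0.
  move=> dj; have Dj : diag_mx d *m (delta_mx j 0 : 'cV[C]_n) = 0.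
    rewrite -colE; apply/matrixP => k l; rewrite !mxE.
    by case: eqP => [->|]; rewrite ?dj ?mulr0n.
  have : Q *m (adjmx P *m (delta_mx j 0 : 'cV[C]_n)) = 0.
    by rewrite QE -!mulmxA [P *m (adjmx P *m _)]mulmxA PP' mul1mx Dj mulmx0.
  move/kerO => /(congr1 (fun v => (P *m v) i 0)).
  by rewrite mulmx0 !mulmxA -colE !mxE.
have O'supp i j : O' i j != 0 -> d 0 i != 0 /\ d 0 j != 0.
  move=> Oij; split; apply/eqP => dz; move: Oij; last by rewrite O'0 ?eqxx.
  by rewrite -hO' adjmxE O'0 // rmorph0 eqxx.
have [t [t0 [tP tM]]] := diag_perturb_psd d0 hO' O'supp.
have QE' (B : 'M[C]_n) : Q + B = adjmx P *m (diag_mx d + P *m B *m adjmx P) *m P.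
  by rewrite mulmxDr mulmxDl -QE !mulmxA P'P mul1mx -mulmxA P'P mulmx1.
exists t; split; [done | split].
  by rewrite QE' -scalemxAr -scalemxAl; apply: psd_conjmx.
by rewrite -scaleNr QE' -scalemxAr -scalemxAl scaleNr; apply: psd_conjmx.
Qed.

Lemma psd_pm_ker n (R T : 'M[C]_n) t : t != 0 ->
  psd (R + t *: T) -> psd (R - t *: T) ->
  forall w : 'cV[C]_n, R *m w = 0 -> T *m w = 0.
Proof.
move=> t0 pP pM w Rw.
have fR : mxform w R w = 0 by rewrite /mxform -mulmxA Rw mulmx0 mxE.
have fP : 0 <= t * mxform w T w.
  by have := pP w; rewrite -/(mxform _ _ _) mxformDm mxformZm fR add0r.
have fM : t * mxform w T w <= 0.
  by have := pM w; rewrite -/(mxform _ _ _) mxformBm mxformZm fR sub0r oppr_ge0.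
have : mxform w (R + t *: T) w = 0.
  by rewrite mxformDm mxformZm fR add0r; apply/le_anti; rewrite fM fP.
move/(psd_ker pP); rewrite mulmxDl Rw add0r -scalemxAl => /eqP.
by rewrite scaler_eq0 (negbTE t0) => /eqP.
Qed.

Lemma herm_conj_eq0 n (O X : 'M[C]_n) : is_herm O ->
  (forall z : 'cV[C]_n, in_rng X (O *m z)) -> adjmx X *m O *m X = 0 -> O = 0.
Proof.
move=> hO rngO XOX.
have OX (b : 'cV[C]_n) : O *m (X *m b) = 0.
  have [c hc] := rngO (X *m b).
  apply: gram_eq0; rewrite {2}hc adjmxM hO adjmxM !mulmxA.
  have : adjmx b *m (adjmx X *m O *m X) *m c = 0 by rewrite XOX mulmx0 mul0mx.
  by rewrite !mulmxA.
apply: mx_eq0_col => z; have [u hu] := rngO z.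
by apply: (herm_ker_sqr hO); rewrite hu OX.
Qed.

End PsdPerturbation.

Section Commutant.
Variables (C : numClosedFieldType) (G : Type) (M N : nat).
Variables (U : G -> 'M[C]_N) (V : G -> 'M[C]_M).
Implicit Types A B : 'M[C]_(M * N).

Lemma commutantD A B : in_commutant U V A -> in_commutant U V B ->
  in_commutant U V (A + B).
Proof. by move=> hA hB g; rewrite mulmxDl mulmxDr hA hB. Qed.

Lemma commutantZ a A : in_commutant U V A -> in_commutant U V (a *: A).
Proof. by move=> hA g; rewrite -scalemxAl -scalemxAr hA. Qed.

Lemma commutantB A B : in_commutant U V A -> in_commutant U V B ->
  in_commutant U V (A - B).
Proof. by move=> hA hB; rewrite -scaleN1r; apply/commutantD/commutantZ. Qed.

Lemma commutantM A B : in_commutant U V A -> in_commutant U V B ->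
  in_commutant U V (A *m B).
Proof. by move=> hA hB g; rewrite -mulmxA hB mulmxA hA mulmxA. Qed.

Lemma commutantZ_inv a A : a != 0 -> in_commutant U V (a *: A) ->
  in_commutant U V A.
Proof. by move=> a0 h; rewrite -[A]scale1r -(mulVf a0) -scalerA; apply: commutantZ. Qed.

Hypothesis U_unitary : forall g, U g *m adjmx (U g) = 1%:M /\ adjmx (U g) *m U g = 1%:M.
Hypothesis V_unitary : forall g, V g *m adjmx (V g) = 1%:M /\ adjmx (V g) *m V g = 1%:M.

Lemma VUc_unitary g : VUc U V g *m adjmx (VUc U V g) = 1%:M /\
                      adjmx (VUc U V g) *m VUc U V g = 1%:M.
Proof.
have [U1 U2] := U_unitary g; have [V1 V2] := V_unitary g.
rewrite /VUc adjmx_tensmx adjmx_conj !mxtens.tensmx_mul -!map_mxM U1 U2 V1 V2.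
by rewrite map_mx1 tensmx11.
Qed.

Lemma commutant_adjmx A : in_commutant U V A -> in_commutant U V (adjmx A).
Proof.
move=> hA g; have [u1 u2] := VUc_unitary g.
have e : adjmx (VUc U V g) *m adjmx A = adjmx A *m adjmx (VUc U V g).
  by rewrite -!adjmxM hA.
rewrite -[LHS]mul1mx -u1 -!mulmxA [adjmx _ *m (adjmx A *m _)]mulmxA e.
by rewrite !mulmxA -mulmxA u2 mulmx1.
Qed.

End Commutant.

Section Blocks.
Variables (C : numClosedFieldType) (p : nat) (d mm : 'I_p -> nat).

Lemma tensmx1_pid dk m (dk0 : (0 < dk)%N) (A : 'M[C]_m) :
  mxtens.tensmx (1%:M : 'M[C]_dk) A *m (pid_mx m : 'M[C]_(dk * m, m)) = pid_mx m *m A.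
Proof.
apply/matrixP => i j; case: (mxtens.mxtens_indexP i) => a b.
set s0 := mxtens.mxtens_index (Ordinal dk0, j).
have vs0 : val s0 = val j by rewrite /= mul0n add0n.
rewrite !mxE (bigD1 s0) //= big1 ?addr0; last first.
  move=> s hs; rewrite !mxE.
  have -> : (s == j :> nat) = false.
    by apply/negbTE; apply: contra hs => /eqP e; apply/eqP/val_inj; rewrite vs0.
  by rewrite /= mulr0.
rewrite [pid_mx m s0 j]mxE vs0 eqxx ltn_ord mulr1 /s0 mxtens.tensmxE mxE.
have [ea|na] := eqVneq a (Ordinal dk0).
  rewrite ea mul1r (bigD1 b) //= big1 ?addr0.
    by rewrite mxE /= mul0n add0n eqxx ltn_ord mul1r.
  move=> k hkb; rewrite mxE /= mul0n add0n.
  by rewrite (_ : (b == k :> nat) = false) ?mul0r //; apply/negbTE; rewrite eq_sym.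
rewrite mul0r big1 // => k _; rewrite mxE.
have a1 : (1 <= a)%N by rewrite lt0n; apply: contra na => /eqP e; apply/eqP/val_inj.
have : (m <= a * m + b)%N.
  by apply: leq_trans (leq_addr _ _); rewrite -{1}(mul1n m) leq_mul2r a1 orbT.
by rewrite /= leqNgt => /negbTE ->; rewrite andbF mul0r.
Qed.

(* [blk_embed k] embeds [C^(mm k)] as [e_0 (x) C^(mm k)] in the [k]-th summand
   of [oplus_l C^(d l) (x) C^(mm l)]. *)
Definition blk_embed (k : 'I_p) : 'M[C]_(\sum_(l < p) (d l * mm l), mm k) :=
  \mxcol_l ((l == k)%:R *: pid_mx (mm k)).

Local Notation blkdiag Ms :=
  (\mxdiag_(l < p) mxtens.tensmx (1%:M : 'M[C]_(d l)) (Ms l)).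

Lemma blk_embed_isometry k : (0 < d k)%N -> adjmx (blk_embed k) *m blk_embed k = 1%:M.
Proof.
move=> dk0; rewrite /blk_embed adjmx_mxcol mul_mxrow_mxcol (bigD1 k) //= big1 ?addr0.
  rewrite eqxx scale1r /adjmx map_pid_mx tr_pid_mx mul_pid_mx minnn.
  by rewrite (minn_idPr _) ?pid_mx_1 // leq_pmull.
by move=> l /negbTE nlk; rewrite nlk scale0r adjmx0 mul0mx.
Qed.

Lemma blk_embed_adj_diag (Ms : forall k : 'I_p, 'M[C]_(mm k)) k : (0 < d k)%N ->
  adjmx (blk_embed k) *m blkdiag Ms = Ms k *m adjmx (blk_embed k).
Proof.
move=> dk0; rewrite /blk_embed adjmx_mxcol mul_mxrow_mxdiag mul_mxrow.
apply: eq_mxrow => l; have [->|nlk] := eqVneq l k; last first.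
  by rewrite scale0r adjmx0 mul0mx mulmx0.
rewrite scale1r.
move: (tensmx1_pid dk0 (adjmx (Ms k))) => /(congr1 (@adjmx _ _ _)).
by rewrite !adjmxM adjmxK adjmx_tensmx adjmx1 adjmxK.
Qed.

Variables (M N : nat) (W : 'M[C]_(\sum_(k < p) (d k * mm k), M * N)).
Hypothesis W_unitary : W *m adjmx W = 1%:M.

Lemma mulmx_blockop (Ms : forall k : 'I_p, 'M[C]_(mm k)) :
  W *m blockop W Ms = blkdiag Ms *m W.
Proof. by rewrite /blockop !mulmxA W_unitary mul1mx. Qed.

(* Compress onto the [k]-th block through [blk_embed k]: supports and ranges
   are carried along. *)
Lemma blockop_supp_sub_rng (O X : 'M[C]_(M * N)) (Os Xs : forall k : 'I_p, 'M[C]_(mm k)) :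
  (forall k, (0 < d k)%N) -> O = blockop W Os -> X = blockop W Xs ->
  supp_sub_rng O X -> forall k, supp_sub_rng (Os k) (Xs k).
Proof.
move=> d0 OE XE OX k v hv; set E := blk_embed k.
have hvt : in_supp O (adjmx W *m (E *m v)).
  move=> w Ow.
  have DOw : blkdiag Os *m (W *m w) = 0.
    by rewrite mulmxA -mulmx_blockop -OE -mulmxA Ow mulmx0.
  have : Os k *m (adjmx E *m (W *m w)) = 0.
    by rewrite mulmxA -blk_embed_adj_diag // -mulmxA DOw mulmx0.
  by move/hv; rewrite !adjmxM adjmxK !mulmxA.
have [u hu] := OX _ hvt; exists (adjmx E *m (W *m u)).
have <- : adjmx E *m (W *m (adjmx W *m (E *m v))) = v.
  by rewrite [W *m _]mulmxA W_unitary mul1mx mulmxA blk_embed_isometry // mul1mx.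
rewrite hu XE [W *m (_ *m u)]mulmxA mulmx_blockop -mulmxA.
by rewrite [adjmx _ *m (_ *m _)]mulmxA blk_embed_adj_diag // -mulmxA.
Qed.

End Blocks.

Section PartialTrace.
Variables (C : numClosedFieldType) (M N : nat).
Implicit Types A B : 'M[C]_(M * N).

Lemma ptraceD A B : ptraceK (A + B) = ptraceK A + ptraceK B.
Proof.
by apply/matrixP => i j; rewrite !mxE -big_split; apply: eq_bigr => a _; rewrite !mxE.
Qed.

Lemma ptraceZ a A : ptraceK (a *: A) = a *: ptraceK A.
Proof.
by apply/matrixP => i j; rewrite !mxE mulr_sumr; apply: eq_bigr => b _; rewrite !mxE.
Qed.

Lemma ptraceB A B : ptraceK (A - B) = ptraceK A - ptraceK B.
Proof. by rewrite -!scaleN1r ptraceD ptraceZ. Qed.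

End PartialTrace.

Section Perturbation.
Variables (C : numClosedFieldType) (G : Type) (M N : nat).
Variables (U : G -> 'M[C]_N) (V : G -> 'M[C]_M) (K0 : 'M[C]_N).
Hypothesis U_unitary : forall g, U g *m adjmx (U g) = 1%:M /\ adjmx (U g) *m U g = 1%:M.
Hypothesis V_unitary : forall g, V g *m adjmx (V g) = 1%:M /\ adjmx (V g) *m V g = 1%:M.
Variables R Q X : 'M[C]_(M * N).
Hypothesis R_CK0 : in_CK0 U V K0 R.
Hypothesis Q_psd : psd Q.
Hypothesis X_comm : in_commutant U V X.
Hypothesis RE : R = adjmx X *m Q *m X.
Hypothesis rng_supp : forall v, in_rng X v <-> in_supp Q v.

Lemma perturbation_ker T : perturbation U V K0 R T ->
  [/\ T <> 0, is_herm T, in_commutant U V T, ptraceK T = 0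
    & forall w : 'cV[C]_(M * N), R *m w = 0 -> T *m w = 0].
Proof.
case: R_CK0 => cR pR trR [T0 [t [t0 [cP pP trP] [_ pM _]]]].
have tn0 : t != 0 by rewrite lt0r_neq0.
split => //.
- have := psd_herm pP.
  rewrite /is_herm adjmxD adjmxZ (psd_herm pR) (conj_Creal (gtr0_real t0)).
  by move/addrI/(scalerI tn0).
- apply: (commutantZ_inv tn0).
  by rewrite -[t *: T](addKr R) addrC; apply: commutantB.
- have : ptraceK R + t *: ptraceK T = ptraceK R + 0.
    by rewrite -ptraceZ -ptraceD trP trR addr0.
  by move/addrI/eqP; rewrite scaler_eq0 (negbTE tn0) => /eqP.
- exact: psd_pm_ker tn0 pP pM.
Qed.

Lemma perturbation_factor T : perturbation U V K0 R T ->
  [/\ is_herm T, in_commutant U V T, ptraceK T = 0 &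
    exists O, [/\ O <> 0, is_herm O, in_commutant U V O, supp_sub_rng O X
                & T = adjmx X *m O *m X]].
Proof.
move=> /perturbation_ker [T0 hT cT trT kerT]; split => //.
have [H [HX cH]] := pinv_left_ker X.
have [Y YE] : exists Y, Y = H *m adjmx X by eexists.
have cX' := commutant_adjmx U_unitary V_unitary X_comm.
have cY : in_commutant U V Y.
  by rewrite YE; apply: commutantM => // g; apply: cH; [exact: X_comm | exact: cX'].
have TYX : T *m (Y *m X) = T.
  by rewrite YE; apply: HX => w Xw; apply: kerT; rewrite RE -mulmxA Xw mulmx0.
have YXT : adjmx (Y *m X) *m T = T by rewrite -{1}hT -adjmxM TYX hT.
have hO : is_herm (adjmx Y *m T *m Y).
  by rewrite /is_herm !adjmxM adjmxK hT mulmxA.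
have TE : T = adjmx X *m (adjmx Y *m T *m Y) *m X.
  by rewrite !mulmxA -adjmxM -!mulmxA TYX YXT.
exists (adjmx Y *m T *m Y); split => //.
- by move=> O0; apply: T0; rewrite TE O0 mulmx0 mul0mx.
- apply: commutantM => //; apply: commutantM => //.
  exact: commutant_adjmx.
- move=> v /(herm_supp_rng hO) [u ->]; exists (adjmx H *m T *m Y *m u).
  by rewrite YE adjmxM adjmxK !mulmxA.
Qed.

Lemma factor_perturbation T O : is_herm T -> in_commutant U V T -> ptraceK T = 0 ->
  O <> 0 -> is_herm O -> in_commutant U V O -> supp_sub_rng O X ->
  T = adjmx X *m O *m X -> perturbation U V K0 R T.
Proof.
case: R_CK0 => cR _ trR hT cT trT O0 hO cO OX TE.
have rngO z : in_rng X (O *m z) by apply/OX/herm_rng_supp.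
have kerO := herm_ker_sub hO (fun z => (rng_supp _).1 (rngO z)).
have [t [t0 [pP pM]]] := psd_perturb Q_psd hO kerO.
split; first by move=> T0; apply/O0/(herm_conj_eq0 hO rngO); rewrite -TE.
exists t; split; [done | split | split].
- by apply: commutantD => //; apply: commutantZ.
- by rewrite RE TE scalemxAl scalemxAr -mulmxDl -mulmxDr; apply: psd_conjmx.
- by rewrite ptraceD ptraceZ trT scaler0 addr0.
- by apply: commutantB => //; apply: commutantZ.
- by rewrite RE TE scalemxAl scalemxAr -mulmxBl -mulmxBr; apply: psd_conjmx.
- by rewrite ptraceB ptraceZ trT scaler0 subr0.
Qed.

End Perturbation.

Unset Implicit Arguments. Set Strict Implicit. Set Printing Implicit Defensive.

Theorem theorem4
  (C : numClosedFieldType)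
  (* the group G and unitary representations U on H = C^N, V on K = C^M *)
  (G : Type) (gmul : G -> G -> G) (gone : G) (ginv : G -> G)
  (hG : is_group gmul gone ginv)
  (M N : nat) (U : G -> 'M[C]_N) (V : G -> 'M[C]_M)
  (hU : unitary_rep gmul gone U) (hV : unitary_rep gmul gone V)
  (* isotypic decomposition K(x)H = oplus_k H_k (x) C^{m_k} of V_g (x) U_g^* *)
  (p : nat) (d mm : 'I_p -> nat)
  (W : 'M[C]_(\sum_(k < p) (d k * mm k), M * N))
  (pi : forall k : 'I_p, G -> 'M[C]_(d k))
  (hW : W *m adjmx W = 1%:M /\ adjmx W *m W = 1%:M)
  (hpi_rep : forall k, unitary_rep gmul gone (pi k))
  (hpi_irr : forall k, irreducible_rep (pi k))
  (hpi_ineq : forall k l, k != l -> ~ equiv_rep (pi k) (pi l))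
  (hmm : forall k, (0 < mm k)%N)
  (hdecomp : forall g, W *m VUc U V g *m adjmx W =
      \mxdiag_(k < p) (mxtens.tensmx (pi k g) (1%:M : 'M[C]_(mm k))))
  (hcomm : forall T : 'M[C]_(M * N),
      in_commutant U V T <-> exists Ms, T = blockop W Ms)
  (K0 : 'M[C]_N) (hK0 : psd K0 /\ psd (1%:M - K0))
  (R Q X : 'M[C]_(M * N))
  (hR : in_CK0 U V K0 R)
  (hQ : in_commutant U V Q /\ psd Q)
  (hX : in_commutant U V X)
  (hRQX : R = adjmx X *m Q *m X)
  (hrng : forall v, in_rng X v <-> in_supp Q v) :
  (forall T : 'M[C]_(M * N),
     perturbation U V K0 R T <->
     [/\ is_herm T, in_commutant U V T, ptraceK T = 0 &
         exists O : 'M[C]_(M * N),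
           [/\ O <> 0, is_herm O, in_commutant U V O, supp_sub_rng O X
             & T = adjmx X *m O *m X]])
  /\
  (forall (O : 'M[C]_(M * N)) (Xs : forall k : 'I_p, 'M[C]_(mm k)),
     O <> 0 -> is_herm O -> in_commutant U V O -> supp_sub_rng O X ->
     X = blockop W Xs ->
     exists Os : forall k : 'I_p, 'M[C]_(mm k),
       O = blockop W Os /\ forall k, supp_sub_rng (Os k) (Xs k)).
Proof.
have [_ _ U_unitary] := hU; have [_ _ V_unitary] := hV; have [_ Q_psd] := hQ.
split=> [T|O Xs _ _ cO OX XE]; first split.
- exact: (perturbation_factor U_unitary V_unitary hR hX hRQX).
- case=> hT cT trT [O [O0 hO cO OX TE]].
  exact: (factor_perturbation hR Q_psd hRQX hrng hT cT trT O0 hO cO OX TE).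
have [Os OE] := (hcomm O).1 cO; exists Os; split => //.
by apply: (blockop_supp_sub_rng hW.1 _ OE XE OX) => k; case: (hpi_irr k).
Qed.
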